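(* For every integer $n\ge 2$, the complete graph $K_n$ satisfies $IDI(K_n)=n$.
   Context: For a finite simple connected graph $G=(V,E)$ with diameter $d$, a rank assignment is a function $f:V\to\mathbb{R}$; under $f$, the string of a vertex $v$ is the $d$-vector whose $i$-th coordinate is the sum of $f(w)$ over all vertices $w$ with $d(v,w)=i$. The ID-index $IDI(G)$ is the minimum $k$ such that there exists $f:V\to\mathbb{R}$ with $|f(V)|=k$ under which all vertices have distinct strings. *)

From mathcomp Require Import all_boot all_order all_algebra.
From mathcomp Require Import Rstruct.
Local Notation R := Rdefinitions.R.
Set Implicit Arguments. Unset Strict Implicit. Unset Printing Implicit Defensive.
Import GRing.Theory Num.Theory.
Local Open Scope ring_scope.

Definition simple_graph (T : finType) (e : rel T) : Prop :=
  symmetric e /\ irreflexive e.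

Fixpoint ball (T : finType) (e : rel T) (x : T) (k : nat) : {set T} :=
  match k with
  | 0 => [set x]
  | k'.+1 => ball e x k' :|: [set y | [exists z in ball e x k', e z y]]
  end.

Definition connected_graph (T : finType) (e : rel T) : Prop :=
  forall x y : T, exists k, y \in ball e x k.

(* graph distance: the least k with y within distance k of x
   (in a connected graph on #|T| vertices, this k is < #|T|). *)
Definition gdist (T : finType) (e : rel T) (x y : T) : nat :=
  find (fun k => y \in ball e x k) (iota 0 #|T|).

Definition diameter (T : finType) (e : rel T) : nat :=
  \max_(x : T) \max_(y : T) gdist e x y.

(* the string of v under the rank assignment f: the d-vector whose
   i-th coordinate (i = 1..d, stored at index i-1) is the sum of f w over
   all w with d(v,w) = i. *)
Definition vstring (T : finType) (e : rel T) (f : T -> R) (v : T)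
  : {ffun 'I_(diameter e) -> R} :=
  [ffun i : 'I_(diameter e) => \sum_(w : T | gdist e v w == i.+1) (f w : R)].

Definition ID_assignment (T : finType) (e : rel T) (f : T -> R) : Prop :=
  injective (vstring e f).

Definition nvalues (T : finType) (f : T -> R) : nat :=
  size (undup [seq f x | x <- enum T]).

Definition is_IDI (T : finType) (e : rel T) (k : nat) : Prop :=
  (exists f : T -> R, ID_assignment e f /\ nvalues f = k) /\
  (forall f : T -> R, ID_assignment e f -> (k <= nvalues f)%N).

Definition K (n : nat) : rel 'I_n := fun i j => i != j.
Arguments K n : clear implicits.

From mathcomp Require Import all_boot all_order all_algebra.
From mathcomp Require Import Rstruct.
Import GRing.Theory Num.Theory.

(* In K_n (n >= 2) every vertex is at distance 1 from all the others and the
   diameter is 1, so the string of v is the single number (sum of f) - f v.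
   Hence the ID rank assignments are exactly the injective ones, and an
   injective function on n vertices takes exactly n values. *)

Local Notation R := Rdefinitions.R.

Lemma nvalues_injective (T : finType) (f : T -> R) :
  injective f -> nvalues f = #|T|.
Proof.
move=> f_inj; rewrite /nvalues undup_id; first by rewrite size_map cardT.
by rewrite map_inj_uniq ?enum_uniq.
Qed.

Lemma ball1_K (n : nat) (v w : 'I_n) : w \in ball (K n) v 1.
Proof.
rewrite /= !inE; have [//|wv] /= := eqVneq w v.
by apply/existsP; exists v; rewrite inE eqxx /K eq_sym.
Qed.

Lemma gdist_K (n : nat) (v w : 'I_n) : gdist (K n) v w = (w != v).
Proof.
rewrite /gdist card_ord.
case: n v w => [|[|n]] v w; [by case: v => [] | by rewrite (ord1 v) (ord1 w) /= inE eqxx |].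
by rewrite /= inE; have [//|_] /= := eqVneq w v; rewrite ball1_K.
Qed.

Lemma diameter_K_le1 (n : nat) : (diameter (K n) <= 1)%N.
Proof.
by apply/bigmax_leqP => v _; apply/bigmax_leqP => w _; rewrite gdist_K leq_b1.
Qed.

Lemma diameter_K (n : nat) : (1 < n)%N -> diameter (K n) = 1%N.
Proof.
case: n => [|[|n]] // _; apply/anti_leq; rewrite diameter_K_le1 /=.
apply: leq_trans (leq_bigmax ord0); apply: leq_trans (leq_bigmax ord_max).
by rewrite gdist_K.
Qed.

Lemma vstring_K (n : nat) (f : 'I_n -> R) (v : 'I_n) :
  vstring (K n) f v = [ffun => (\sum_w f w - f v)%R].
Proof.
apply/ffunP => i; rewrite !ffunE.
have -> : val i = 0%N.
  by have := leq_trans (ltn_ord i) (diameter_K_le1 n); rewrite ltnS leqn0 => /eqP.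
rewrite [in RHS](bigD1 v) //= addrAC subrr add0r.
by apply: eq_bigl => w; rewrite gdist_K; case: (w != v).
Qed.

Lemma ID_assignment_K (n : nat) (n_gt1 : (1 < n)%N) (f : 'I_n -> R) :
  ID_assignment (K n) f <-> injective f.
Proof.
have i0 : 'I_(diameter (K n)) by rewrite diameter_K //; exact: ord0.
rewrite /ID_assignment; split => f_inj v w.
- move=> fvw; apply: f_inj; apply/ffunP => i.
  by rewrite !vstring_K !ffunE fvw.
- rewrite !vstring_K => /ffunP/(_ i0); rewrite !ffunE.
  by move=> /addrI /oppr_inj /f_inj.
Qed.

Theorem mainTheorem11 (n : nat) : 2 <= n -> is_IDI (K n) n.
Proof.
move=> n_gt1; split.
- have val_natr_inj : injective (fun i : 'I_n => (val i)%:R : R)%R.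
    by move=> i j /eqP; rewrite eqr_nat => /eqP /val_inj.
  exists (fun i => (val i)%:R)%R; split; first exact/(ID_assignment_K _ n_gt1).
  by rewrite nvalues_injective ?card_ord.
- by move=> f /(ID_assignment_K _ n_gt1) /nvalues_injective ->; rewrite card_ord.
Qed.
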